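(* Let $i\in\{1,2\}$ and let $\alpha_1,\dots,\alpha_N$ be $x_i$-curves in $\mathbb{R}^2$. Then there are $x_i$-curves $\beta_j=\gamma^i(f_j)$, $j=1,\dots,N$, such that $\alpha_1\cup\dots\cup\alpha_N=\beta_1\cup\dots\cup\beta_N$ and $f_{j-1}(t)\le f_j(t)$ for all $t\in\mathbb{R}$ and all $1<j\le N$. If the curves $\alpha_j$ are piecewise linear, then so are the curves $\beta_j$.
   Context: For a $1$-Lipschitz $f:\mathbb{R}\to\mathbb{R}$, the $x_1$-curve parametrized by $f$ is $\gamma^1(f)=\{(t,f(t)):t\in\mathbb{R}\}$ and the $x_2$-curve is $\gamma^2(f)=\{(f(t),t):t\in\mathbb{R}\}$. An $x_i$-curve is a set of this form; it is piecewise linear if its parametrization is. *)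

From Stdlib Require Import Reals.
Open Scope R_scope.

Definition lipschitz1 (f : R -> R) : Prop :=
  forall s t : R, Rabs (f s - f t) <= Rabs (s - t).

Definition gamma (i : nat) (f : R -> R) (p : R * R) : Prop :=
  exists t : R, p = (if Nat.eqb i 1 then (t, f t) else (f t, t)).

Definition pwlin (f : R -> R) : Prop :=
  forall a b : R, a < b ->
    exists (k : nat) (t : nat -> R),
      t 0%nat = a /\ t k = b /\
      (forall m, (m < k)%nat -> t m < t (S m)) /\
      (forall m, (m < k)%nat -> exists c d : R,
          forall x, t m <= x <= t (S m) -> f x = c * x + d).

Definition is_curve (i : nat) (A : R * R -> Prop) : Prop :=
  exists f : R -> R, lipschitz1 f /\ (forall p, A p <-> gamma i f p).

Definition is_pl_curve (i : nat) (A : R * R -> Prop) : Prop :=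
  exists f : R -> R, lipschitz1 f /\ pwlin f /\ (forall p, A p <-> gamma i f p).

From Stdlib Require Import Reals.
From Stdlib Require Import Lra Lia FunctionalExtensionality IndefiniteDescription.
Open Scope R_scope.

(* Take 1-Lipschitz parametrizations g_1, ..., g_N and sort them pointwise, so that
   f_j(t) is the j-th smallest of g_1(t), ..., g_N(t).  At every t the values
   f_j(t) are those of the g_j(t), so the union of the graphs does not change.
   Insertion sort produces each f_j from the g_k by pointwise min and max only
   (inserting G into F_1 <= ... <= F_N puts G clamped to [F_(j-1), F_j] at
   position j), and both 1-Lipschitz and piecewise linear functions are closed
   under min and max: on an interval where f and g are affine, min(f, g) is
   affine on each side of the point where f - g changes sign. *)

Lemma lipschitz1_min f g :
  lipschitz1 f -> lipschitz1 g -> lipschitz1 (fun x => Rmin (f x) (g x)).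
Proof.
  intros Hf Hg s t. generalize (Hf s t) (Hg s t). unfold Rmin.
  destruct (Rle_dec (f s) (g s)), (Rle_dec (f t) (g t)); unfold Rabs;
    repeat destruct Rcase_abs; lra.
Qed.

Lemma lipschitz1_max f g :
  lipschitz1 f -> lipschitz1 g -> lipschitz1 (fun x => Rmax (f x) (g x)).
Proof.
  intros Hf Hg s t. generalize (Hf s t) (Hg s t). unfold Rmax.
  destruct (Rle_dec (f s) (g s)), (Rle_dec (f t) (g t)); unfold Rabs;
    repeat destruct Rcase_abs; lra.
Qed.

Definition affine_on (f : R -> R) (a b : R) : Prop :=
  exists c d, forall x, a <= x <= b -> f x = c * x + d.

Inductive pw_affine (f : R -> R) : R -> R -> Prop :=
| pw_affine_piece a b : a < b -> affine_on f a b -> pw_affine f a b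
| pw_affine_cat a b c : pw_affine f a b -> pw_affine f b c -> pw_affine f a c.

Lemma pw_affine_lt f a b : pw_affine f a b -> a < b.
Proof. induction 1; lra. Qed.

Lemma affine_on_sub f a b a' b' :
  affine_on f a b -> a <= a' -> b' <= b -> affine_on f a' b'.
Proof. intros [c [d H]] ? ?. exists c, d. intros; apply H; lra. Qed.

Lemma pw_affine_sub f a b a' b' :
  pw_affine f a b -> a <= a' -> a' < b' -> b' <= b -> pw_affine f a' b'.
Proof.
  intros H; revert a' b'.
  induction H as [a b Hab Hf | a b c H1 IH1 H2 IH2]; intros a' b' ? ? ?.
  - apply pw_affine_piece; [lra|]. eapply affine_on_sub; eauto.
  - destruct (Rle_dec b' b); [apply IH1; lra|].
    destruct (Rle_dec b a'); [apply IH2; lra|].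
    apply pw_affine_cat with b; [apply IH1 | apply IH2]; lra.
Qed.

Lemma pw_affine_of_pwlin f a b : pwlin f -> a < b -> pw_affine f a b.
Proof.
  intros Hf Hab. destruct (Hf a b Hab) as [k [t [<- [<- [Hinc Haff]]]]].
  assert (Hpiece : forall m, (m < k)%nat -> pw_affine f (t m) (t (S m)))
    by (intros m Hm; apply pw_affine_piece; [apply Hinc | apply Haff]; auto).
  assert (Hprefix : forall m, (m < k)%nat -> pw_affine f (t 0%nat) (t (S m))).
  { induction m as [|m IH]; intros Hm; [apply Hpiece; lia|].
    apply pw_affine_cat with (t (S m)); [apply IH | apply Hpiece]; lia. }
  destruct k as [|k]; [lra|]. apply Hprefix; lia.
Qed.

Lemma pwlin_partition_of_pw_affine f a b : pw_affine f a b ->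
  exists (k : nat) (t : nat -> R),
    t 0%nat = a /\ t k = b /\
    (forall m, (m < k)%nat -> t m < t (S m)) /\
    (forall m, (m < k)%nat -> affine_on f (t m) (t (S m))).
Proof.
  induction 1 as [a b Hab Hf | a b c H1 IH1 H2 IH2].
  - exists 1%nat, (fun m => match m with 0%nat => a | _ => b end).
    repeat split; auto; intros m Hm; replace m with 0%nat by lia; auto.
  - destruct IH1 as [k1 [t1 [A1 [B1 [C1 D1]]]]].
    destruct IH2 as [k2 [t2 [A2 [B2 [C2 D2]]]]].
    apply pw_affine_lt in H1. apply pw_affine_lt in H2.
    assert (k1 <> 0%nat) by (intros ->; lra).
    assert (k2 <> 0%nat) by (intros ->; lra).
    set (t := fun m => if (m <=? k1)%nat then t1 m else t2 (m - k1)%nat).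
    (* the two partitions are glued at [t1 k1 = b = t2 0] *)
    assert (Hstep : forall m, (m < k1 + k2)%nat ->
      t m = t1 m /\ t (S m) = t1 (S m) /\ (m < k1)%nat \/
      t m = t2 (m - k1)%nat /\ t (S m) = t2 (S (m - k1)) /\ (m - k1 < k2)%nat).
    { intros m Hm. unfold t.
      destruct (Nat.leb_spec m k1), (Nat.leb_spec (S m) k1); try lia.
      - left; repeat split; auto; lia.
      - right. replace m with k1 by lia. rewrite Nat.sub_diag, B1, <- A2.
        replace (S k1 - k1)%nat with 1%nat by lia. repeat split; auto; lia.
      - right. replace (S m - k1)%nat with (S (m - k1)) by lia. repeat split; auto; lia. }
    exists (k1 + k2)%nat, t. repeat split.
    + unfold t. simpl. auto.
    + unfold t. destruct (Nat.leb_spec (k1 + k2) k1); [lia|].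
      replace (k1 + k2 - k1)%nat with k2 by lia. auto.
    + intros m Hm. destruct (Hstep m Hm) as [[-> [-> ?]]|[-> [-> ?]]]; auto.
    + intros m Hm. destruct (Hstep m Hm) as [[-> [-> ?]]|[-> [-> ?]]]; auto.
Qed.

Lemma pwlin_of_pw_affine f : (forall a b, a < b -> pw_affine f a b) -> pwlin f.
Proof. intros Hf a b Hab. exact (pwlin_partition_of_pw_affine f a b (Hf a b Hab)). Qed.

Lemma affine_nonpos_between c d a b x :
  a < b -> a <= x <= b -> c * a + d <= 0 -> c * b + d <= 0 -> c * x + d <= 0.
Proof.
  intros.
  assert (E : (b - a) * (c * x + d) = (b - x) * (c * a + d) + (x - a) * (c * b + d))
    by ring.
  assert ((b - x) * (c * a + d) <= 0) by nra.
  assert ((x - a) * (c * b + d) <= 0) by nra.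
  nra.
Qed.

Lemma affine_on_min_l f g a b : a < b -> affine_on f a b -> affine_on g a b ->
  f a <= g a -> f b <= g b -> affine_on (fun x => Rmin (f x) (g x)) a b.
Proof.
  intros Hab [c1 [d1 Hf]] [c2 [d2 Hg]] Ha Hb. exists c1, d1. intros x Hx.
  rewrite Hf, Hg in Ha, Hb by lra. rewrite Hf, Hg by lra.
  assert ((c1 - c2) * x + (d1 - d2) <= 0) by (apply affine_nonpos_between with a b; lra).
  rewrite Rmin_left; lra.
Qed.

Lemma affine_on_min_r f g a b : a < b -> affine_on f a b -> affine_on g a b ->
  g a <= f a -> g b <= f b -> affine_on (fun x => Rmin (f x) (g x)) a b.
Proof.
  intros. destruct (affine_on_min_l g f a b) as [c [d Hmin]]; auto.
  exists c, d. intros. rewrite Rmin_comm; auto.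
Qed.

Lemma affine_on_crossing f g a b : a < b -> affine_on f a b -> affine_on g a b ->
  f a < g a -> g b < f b -> exists m, a < m < b /\ f m = g m.
Proof.
  intros Hab [c1 [d1 Hf]] [c2 [d2 Hg]] Ha Hb.
  rewrite Hf, Hg in Ha, Hb by lra.
  assert (Hc : 0 < c1 - c2) by nra.
  set (m := - (d1 - d2) / (c1 - c2)).
  assert (Hm : (c1 - c2) * m + (d1 - d2) = 0) by (unfold m; field; lra).
  assert (a < m < b) by (split; nra).
  exists m. split; auto. rewrite Hf, Hg by lra. lra.
Qed.

Lemma pw_affine_min_cross f g a b : a < b -> affine_on f a b -> affine_on g a b ->
  f a <= g a -> g b <= f b -> pw_affine (fun x => Rmin (f x) (g x)) a b.
Proof.
  intros Hab Hf Hg Ha Hb.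
  destruct (Req_dec (f a) (g a)).
  { apply pw_affine_piece; auto. apply affine_on_min_r; auto; lra. }
  destruct (Req_dec (f b) (g b)).
  { apply pw_affine_piece; auto. apply affine_on_min_l; auto; lra. }
  destruct (affine_on_crossing f g a b) as [m [Hm Hfg]]; auto; try lra.
  apply pw_affine_cat with m; apply pw_affine_piece; try lra.
  - apply affine_on_min_l; try lra; eapply affine_on_sub; eauto; lra.
  - apply affine_on_min_r; try lra; eapply affine_on_sub; eauto; lra.
Qed.

Lemma pw_affine_min_affine f g a b : a < b -> affine_on f a b -> affine_on g a b ->
  pw_affine (fun x => Rmin (f x) (g x)) a b.
Proof.
  intros Hab Hf Hg.
  destruct (Rle_dec (f a) (g a)), (Rle_dec (g b) (f b)).
  - apply pw_affine_min_cross; auto.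
  - apply pw_affine_piece; auto. apply affine_on_min_l; auto; lra.
  - apply pw_affine_piece; auto. apply affine_on_min_r; auto; lra.
  - replace (fun x => Rmin (f x) (g x)) with (fun x => Rmin (g x) (f x))
      by (apply functional_extensionality; intros; apply Rmin_comm).
    apply pw_affine_min_cross; auto; lra.
Qed.

Lemma pw_affine_min_piece f g a b : affine_on f a b -> pw_affine g a b ->
  pw_affine (fun x => Rmin (f x) (g x)) a b.
Proof.
  intros Hf Hg; revert Hf.
  induction Hg as [a b Hab Hg | a b c H1 IH1 H2 IH2]; intros Hf.
  - apply pw_affine_min_affine; auto.
  - pose proof (pw_affine_lt _ _ _ H1). pose proof (pw_affine_lt _ _ _ H2).
    apply pw_affine_cat with b; [apply IH1 | apply IH2];
      eapply affine_on_sub; eauto; lra.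
Qed.

Lemma pw_affine_min f g a b : pw_affine f a b -> pw_affine g a b ->
  pw_affine (fun x => Rmin (f x) (g x)) a b.
Proof.
  intros Hf; revert g.
  induction Hf as [a b Hab Hf | a b c H1 IH1 H2 IH2]; intros g Hg.
  - apply pw_affine_min_piece; auto.
  - pose proof (pw_affine_lt _ _ _ H1). pose proof (pw_affine_lt _ _ _ H2).
    apply pw_affine_cat with b; [apply IH1 | apply IH2];
      eapply pw_affine_sub; eauto; lra.
Qed.

Lemma pw_affine_opp f a b : pw_affine f a b -> pw_affine (fun x => - f x) a b.
Proof.
  induction 1 as [a b Hab [c [d H]] | a b c H1 IH1 H2 IH2].
  - apply pw_affine_piece; auto. exists (- c), (- d). intros; rewrite H; auto; ring.
  - apply pw_affine_cat with b; auto.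
Qed.

Lemma pwlin_min f g : pwlin f -> pwlin g -> pwlin (fun x => Rmin (f x) (g x)).
Proof.
  intros Hf Hg. apply pwlin_of_pw_affine. intros a b Hab.
  apply pw_affine_min; apply pw_affine_of_pwlin; auto.
Qed.

Lemma pwlin_max f g : pwlin f -> pwlin g -> pwlin (fun x => Rmax (f x) (g x)).
Proof.
  intros Hf Hg. apply pwlin_of_pw_affine. intros a b Hab.
  replace (fun x => Rmax (f x) (g x)) with (fun x => - Rmin (- f x) (- g x)).
  - apply pw_affine_opp, (pw_affine_min (fun x => - f x) (fun x => - g x));
      apply pw_affine_opp, pw_affine_of_pwlin; auto.
  - apply functional_extensionality; intros x.
    rewrite Ropp_Rmin, !Ropp_involutive. reflexivity.
Qed.

Definition takes_value (N : nat) (x : nat -> R) (z : R) : Prop :=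
  exists k, (1 <= k <= N)%nat /\ x k = z.

Definition sorted_upto (N : nat) (x : nat -> R) : Prop :=
  forall j, (1 < j <= N)%nat -> x (j - 1)%nat <= x j.

Lemma takes_value_S N x z :
  takes_value (S N) x z <-> takes_value N x z \/ x (S N) = z.
Proof.
  split.
  - intros [k [Hk <-]]. destruct (Nat.eq_dec k (S N)) as [->|Hne]; [now right|].
    left. exists k. split; [lia|reflexivity].
  - intros [[k [Hk <-]]| <-]; [exists k; split; [lia|reflexivity]|].
    exists (S N). split; [lia|reflexivity].
Qed.

Ltac min_max := unfold Rmin, Rmax in *;
  repeat match goal with
  | |- context [Rle_dec ?a ?b] => destruct (Rle_dec a b)
  | H : context [Rle_dec ?a ?b] |- _ => destruct (Rle_dec a b)
  end; lra.

Definition insert (x : nat -> R) (y : R) (N j : nat) : R :=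
  if Nat.eqb j 1 then Rmin (x 1%nat) y
  else if Nat.eqb j (S N) then Rmax (x N) y
  else Rmax (x (j - 1)%nat) (Rmin (x j) y).

Section Insertion.
Variables (x : nat -> R) (y : R) (N : nat).
Hypothesis N_pos : (1 <= N)%nat.
Hypothesis x_sorted : sorted_upto N x.

Lemma insert_sorted : sorted_upto (S N) (insert x y N).
Proof.
  intros j Hj. unfold insert.
  destruct (Nat.eqb_spec (j - 1) 1) as [Ej1|], (Nat.eqb_spec (j - 1) (S N)),
    (Nat.eqb_spec j 1), (Nat.eqb_spec j (S N)) as [EjN|]; try lia.
  - assert (N = 1%nat) by lia. subst. min_max.
  - rewrite Ej1. min_max.
  - subst j. replace (S N - 1)%nat with N by lia.
    pose proof (x_sorted N ltac:(lia)). min_max.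
  - pose proof (x_sorted (j - 1)%nat ltac:(lia)). pose proof (x_sorted j ltac:(lia)).
    min_max.
Qed.

Lemma insert_value j :
  (1 <= j <= S N)%nat -> takes_value N x (insert x y N j) \/ insert x y N j = y.
Proof.
  intros Hj. unfold insert.
  assert (Hx : forall k, (1 <= k <= N)%nat -> takes_value N x (x k))
    by (intros k Hk; exists k; auto).
  destruct (Nat.eqb_spec j 1); [|destruct (Nat.eqb_spec j (S N))].
  all: unfold Rmin, Rmax; repeat destruct Rle_dec;
    solve [right; reflexivity | left; apply Hx; lia].
Qed.

(* [x k] lands at position [k] if [x k <= y], and at position [k+1] otherwise. *)
Lemma insert_keeps k :
  (1 <= k <= N)%nat -> takes_value (S N) (insert x y N) (x k).
Proof.
  intros Hk. unfold insert. destruct (Rle_dec (x k) y).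
  - exists k. split; [lia|].
    destruct (Nat.eqb_spec k 1); [subst; min_max|].
    destruct (Nat.eqb_spec k (S N)); [lia|].
    pose proof (x_sorted k ltac:(lia)). min_max.
  - exists (S k). split; [lia|].
    destruct (Nat.eqb_spec (S k) 1); [lia|].
    destruct (Nat.eqb_spec (S k) (S N)) as [E|].
    + injection E as ->. min_max.
    + replace (S k - 1)%nat with k by lia. min_max.
Qed.

Lemma locate_between :
  y < x 1%nat \/ x N <= y \/
  exists j, (1 < j <= N)%nat /\ x (j - 1)%nat <= y <= x j.
Proof.
  clear x_sorted. induction N as [|n IH]; [lia|].
  destruct (Nat.eq_dec n 0) as [->|Hn].
  - destruct (Rlt_le_dec y (x 1%nat)); auto.
  - destruct (IH ltac:(lia)) as [Hlt|[Hle|[j [Hj Hy]]]]; auto.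
    + destruct (Rle_dec (x (S n)) y) as [Hle'|Hlt]; auto.
      right; right. exists (S n). replace (S n - 1)%nat with n by lia.
      split; [lia|lra].
    + right; right. exists j. split; [lia|auto].
Qed.

Lemma insert_keeps_y : takes_value (S N) (insert x y N) y.
Proof.
  unfold insert. destruct locate_between as [Hlt|[Hle|[j [Hj Hy]]]].
  - exists 1%nat. split; [lia|]. simpl. min_max.
  - exists (S N). split; [lia|].
    destruct (Nat.eqb_spec (S N) 1); [lia|]. rewrite Nat.eqb_refl. min_max.
  - exists j. split; [lia|].
    destruct (Nat.eqb_spec j 1), (Nat.eqb_spec j (S N)); try lia. min_max.
Qed.

Lemma insert_values z :
  takes_value (S N) (insert x y N) z <-> takes_value N x z \/ y = z.
Proof.
  split.
  - intros [j [Hj <-]]. destruct (insert_value j Hj) as [H | ->]; auto.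
  - intros [[k [Hk <-]]| <-]; [apply insert_keeps, Hk | apply insert_keeps_y].
Qed.
End Insertion.

Lemma sort_pointwise (P : (R -> R) -> Prop)
    (P_min : forall u v, P u -> P v -> P (fun t => Rmin (u t) (v t)))
    (P_max : forall u v, P u -> P v -> P (fun t => Rmax (u t) (v t)))
    (N : nat) (g : nat -> R -> R) :
  (forall j, (1 <= j <= N)%nat -> P (g j)) ->
  exists f : nat -> R -> R,
    (forall j, (1 <= j <= N)%nat -> P (f j)) /\
    (forall t z, takes_value N (fun j => g j t) z <-> takes_value N (fun j => f j t) z) /\
    (forall t, sorted_upto N (fun j => f j t)).
Proof.
  induction N as [|N IH]; intros Hg.
  - exists g. split; [|split]; [auto | tauto | intros t j Hj; lia].
  - destruct (Nat.eq_dec N 0) as [->|HN].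
    { exists g. split; [|split]; [auto | tauto | intros t j Hj; lia]. }
    destruct (IH (fun j Hj => Hg j ltac:(lia))) as [F [HF [Hval Hsort]]].
    exists (fun j t => insert (fun k => F k t) (g (S N) t) N j).
    split; [|split].
    + intros j Hj. unfold insert.
      destruct (Nat.eqb_spec j 1); [|destruct (Nat.eqb_spec j (S N))];
        repeat first [apply P_min | apply P_max | apply HF; lia | apply Hg; lia].
    + intros t z. rewrite takes_value_S, insert_values by (auto; lia).
      rewrite (Hval t z). intuition.
    + intros t. apply insert_sorted; auto; lia.
Qed.

Lemma gamma_iff i f p :
  gamma i f p <-> if Nat.eqb i 1 then f (fst p) = snd p else f (snd p) = fst p.
Proof.
  destruct p as [x y]. unfold gamma. simpl.
  destruct (Nat.eqb i 1); split.
  - intros [t E]. now injection E as -> ->.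
  - intros <-. now exists x.
  - intros [t E]. now injection E as -> ->.
  - intros <-. now exists y.
Qed.

Lemma gamma_inj i f f' : (forall p, gamma i f p <-> gamma i f' p) -> f = f'.
Proof.
  intros H. apply functional_extensionality. intros t.
  destruct (Nat.eqb i 1) eqn:Ei.
  - specialize (H (t, f t)). rewrite !gamma_iff, Ei in H. symmetry. now apply H.
  - specialize (H (f t, t)). rewrite !gamma_iff, Ei in H. symmetry. now apply H.
Qed.

Lemma gamma_union_eq i N g f :
  (forall t z, takes_value N (fun j => g j t) z <-> takes_value N (fun j => f j t) z) ->
  forall p, (exists j, (1 <= j <= N)%nat /\ gamma i (g j) p) <->
            (exists j, (1 <= j <= N)%nat /\ gamma i (f j) p).
Proof.
  intros Hval p. setoid_rewrite gamma_iff.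
  destruct (Nat.eqb i 1); apply Hval.
Qed.

Lemma curve_parametrizations i N (alpha : nat -> R * R -> Prop) :
  (forall j, (1 <= j <= N)%nat -> is_curve i (alpha j)) ->
  exists g : nat -> R -> R, forall j, (1 <= j <= N)%nat ->
    lipschitz1 (g j) /\ forall p, alpha j p <-> gamma i (g j) p.
Proof.
  intros Hc. apply functional_choice with
    (R := fun j h => (1 <= j <= N)%nat -> lipschitz1 h /\ forall p, alpha j p <-> gamma i h p).
  intros j. destruct (Compare_dec.le_dec 1 j), (Compare_dec.le_dec j N).
  all: try (exists (fun x => x); intros; lia).
  destruct (Hc j ltac:(lia)) as [h Hh]. now exists h.
Qed.

Lemma pwlin_of_pl_curve i g (A : R * R -> Prop) :
  (forall p, A p <-> gamma i g p) -> is_pl_curve i A -> pwlin g.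
Proof.
  intros HA [h [_ [Hh HAh]]].
  replace g with h; auto.
  apply (gamma_inj i). intros p. rewrite <- HA, HAh. reflexivity.
Qed.

Theorem lemma4p6 (i : nat) (N : nat) (alpha : nat -> (R * R -> Prop)) :
  (i = 1%nat \/ i = 2%nat) ->
  (forall j, (1 <= j <= N)%nat -> is_curve i (alpha j)) ->
  exists f : nat -> R -> R,
    (forall j, (1 <= j <= N)%nat -> lipschitz1 (f j)) /\
    (forall p, (exists j, (1 <= j <= N)%nat /\ alpha j p) <->
               (exists j, (1 <= j <= N)%nat /\ gamma i (f j) p)) /\
    (forall j t, (1 < j <= N)%nat -> f (j - 1)%nat t <= f j t) /\
    ((forall j, (1 <= j <= N)%nat -> is_pl_curve i (alpha j)) ->
     forall j, (1 <= j <= N)%nat -> pwlin (f j)).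
Proof.
  (* [gamma] reads every [i <> 1] as the x_2 case, so the range of [i] is not needed. *)
  intros _ Hcurves.
  destruct (curve_parametrizations i N alpha Hcurves) as [g Hg].
  set (all_pwlin := forall j, (1 <= j <= N)%nat -> pwlin (g j)).
  destruct (sort_pointwise (fun h => lipschitz1 h /\ (all_pwlin -> pwlin h))) with N g
    as [f [Hf [Hval Hsorted]]].
  - intros u v [Lu Pu] [Lv Pv]. split; [now apply lipschitz1_min|].
    intros Hpl. apply pwlin_min; auto.
  - intros u v [Lu Pu] [Lv Pv]. split; [now apply lipschitz1_max|].
    intros Hpl. apply pwlin_max; auto.
  - intros j Hj. split; [apply Hg, Hj | auto].
  - exists f. split; [|split; [|split]].
    + intros j Hj. apply Hf, Hj.
    + intros p. rewrite <- (gamma_union_eq i N g f Hval p).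
      split; intros [j [Hj Hp]]; exists j; split; auto; apply (Hg j Hj); auto.
    + intros j t Hj. apply Hsorted, Hj.
    + intros Hpl j Hj. apply Hf; auto.
      intros k Hk. apply (pwlin_of_pl_curve i (g k) (alpha k)); auto. apply Hg, Hk.
Qed.
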